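(* The function $\lambda\mapsto\epsilon(\lambda)$, $\lambda\ge1$, is positive, continuous, convex and strictly decreasing; and for every $x\in\mathbb{S}$ the same holds for $\lambda\mapsto\epsilon(\lambda,x)$, $\lambda\ge1$.
   Context: Let $\pi,q$ be probability densities with respect to a $\sigma$-finite measure $\mu$ on $\mathbb{X}$ with $q>0$ wherever $\pi>0$; $\pi(dx)=\pi(x)\mu(dx)$, $q(dx)=q(x)\mu(dx)$, $\mathbb{S}=\{\pi>0\}$, $w=\pi/q$ on $\mathbb{S}$ and $0$ elsewhere. For integer $N\ge1$ and $z_1\in\mathbb{S}$, $\epsilon(N,z_1)=\int_{\mathbb{X}^{N-1}}\frac{w(z_1)}{\sum_{i=1}^Nw(z_i)}\prod_{n=2}^Nq(dz_n)$ (so $\epsilon(1,z_1)=1$) and $\epsilon(N)=\int_{\mathbb{S}}\epsilon(N,z)\pi(dz)$. For real $\lambda\ge1$ with $\beta=\lfloor\lambda\rfloor+1-\lambda$: $\epsilon(\lambda,x)=\beta\epsilon(\lfloor\lambda\rfloor,x)+(1-\beta)\epsilon(\lfloor\lambda\rfloor+1,x)$ and $\epsilon(\lambda)=\beta\epsilon(\lfloor\lambda\rfloor)+(1-\beta)\epsilon(\lfloor\lambda\rfloor+1)$. *)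

From HB Require Import structures.
From mathcomp Require Import all_boot all_order all_algebra.
From mathcomp Require Import all_classical all_reals all_analysis.
Set Implicit Arguments. Unset Strict Implicit. Unset Printing Implicit Defensive.
Import Order.TTheory GRing.Theory Num.Theory.
Import numFieldNormedType.Exports.
Local Open Scope classical_set_scope.
Local Open Scope ring_scope.

Section Eps.
Context (R : realType) (d : measure_display) (X : measurableType d)
        (mu : {measure set X -> \bar R}) (pi q : X -> R).

Definition supp : set X := [set x | 0 < pi x].

Definition wgt (x : X) : R := if 0 < pi x then pi x / q x else 0.

(* eps_iter k z1 acc =
   int_{X^k} w(z1) / (acc + sum_{j} w(y_j)) prod_j q(dy_j),
   written as an iterated integral with q(dy) = q(y) mu(dy). *)
Fixpoint eps_iter (k : nat) (z1 : X) (acc : R) : \bar R :=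
  match k with
  | 0%N => (wgt z1 / acc)%:E
  | k'.+1 => (\int[mu]_(y in setT) ((q y)%:E * eps_iter k' z1 (acc + wgt y)))%E
  end.

(* epsilon(N, z1) for N >= 1 (values lie in [0,1], so fine is harmless) *)
Definition epsN (N : nat) (z1 : X) : R := fine (eps_iter N.-1 z1 (wgt z1)).

Definition epsN_bar (N : nat) : R :=
  fine (\int[mu]_(z in supp) ((pi z)%:E * (epsN N z)%:E))%E.

Definition beta (lam : R) : R := (Num.truncn lam)%:R + 1 - lam.

Definition epsLx (lam : R) (x : X) : R :=
  beta lam * epsN (Num.truncn lam) x
  + (1 - beta lam) * epsN (Num.truncn lam).+1 x.

Definition epsL (lam : R) : R :=
  beta lam * epsN_bar (Num.truncn lam)
  + (1 - beta lam) * epsN_bar (Num.truncn lam).+1.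

End Eps.

Definition pos_cont_convex_decr (R : realType) (f : R -> R) : Prop :=
  [/\ (forall lam, 1 <= lam -> 0 < f lam),
      {within [set lam : R | 1 <= lam], continuous f},
      (forall a b t, 1 <= a -> 1 <= b -> 0 <= t <= 1 ->
          f (t * a + (1 - t) * b) <= t * f a + (1 - t) * f b)
    & (forall a b, 1 <= a -> a < b -> f b < f a)].

(* For z in S, epsilon(N, z) = w(z) F_{N-1}(w(z)), where F_0(a) = 1/a and
   F_{k+1}(a) = \int F_k(a + w(y)) q(dy).  The averaging operator
   f |-> \int f(. + w(y)) q(dy) is linear, monotone and fixes constants, so
   the decrements F_k - F_{k+1} are its iterates applied to
   (F_0 - F_1)(a) = \int (1/a - 1/(a + w(y))) q(dy).  This function is
   positive (w > 0 on the non-null set S) and nonincreasing in a (1/a is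
   convex), hence the decrements are positive and nonincreasing in k: the
   sequences N |-> epsilon(N, z) and their pi-average N |-> epsilon(N) are
   positive, strictly decreasing and convex for N >= 1.  Finally, the
   piecewise-linear interpolation of such a sequence lies above each of its
   chord lines on [1, +oo) and coincides with one of them at every point; it is
   therefore convex, strictly decreasing, positive and Lipschitz. *)

From HB Require Import structures.
From mathcomp Require Import all_boot all_order all_algebra.
From mathcomp Require Import all_classical all_reals all_analysis.
From mathcomp Require Import ring lra.
From mathcomp Require Import measurable_realfun.
Set Implicit Arguments.
Unset Strict Implicit.
Unset Printing Implicit Defensive.
Import Order.TTheory GRing.Theory Num.Theory.
Import numFieldNormedType.Exports.
Local Open Scope classical_set_scope.
Local Open Scope ring_scope.

Section piecewise_linear_interpolation.
Variables (R : realType) (s : nat -> R).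
Hypothesis s_gt0 : forall n, (1 <= n)%N -> 0 < s n.
Hypothesis s_decr : forall n, (1 <= n)%N -> s n.+1 < s n.
Hypothesis s_convex : forall n, (1 <= n)%N -> 0 <= s n - 2 * s n.+1 + s n.+2.

Let slope n := s n.+1 - s n.

Let slope_lt0 {n} : (1 <= n)%N -> slope n < 0.
Proof. by move=> /s_decr; rewrite /slope; lra. Qed.

Let slope_le {m n} : (1 <= m)%N -> (m <= n)%N -> slope m <= slope n.
Proof.
move=> m1; elim: n => [|n IH]; first by rewrite leqn0 => /eqP m0; rewrite m0 in m1.
rewrite leq_eqVlt => /predU1P[-> //|]; rewrite ltnS => mn.
apply: le_trans (IH mn) _.
by have := s_convex (leq_trans m1 mn); rewrite /slope; lra.
Qed.

Let increment_bounds {i} k : (1 <= i)%N ->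
  k%:R * slope i <= s (i + k) - s i <= k%:R * slope (i + k).
Proof.
move=> i1; elim: k => [|k /andP[lo hi]]; first by rewrite addn0 !mul0r subrr lexx.
have e : s (i + k.+1) - s i = slope (i + k) + (s (i + k) - s i).
  by rewrite /slope addnS; ring.
have s1 := slope_le i1 (leq_addr k i).
have s2 := slope_le (leq_trans i1 (leq_addr k i)) (leqnSn (i + k)).
have s3 : k%:R * slope (i + k) <= k%:R * slope (i + k).+1 by rewrite ler_wpM2l.
by rewrite e -natr1 addnS !mulrDl !mul1r; apply/andP; split; lra.
Qed.

Let chord m (x : R) := s m + (x - m%:R) * slope m.

Let chord_le_s {m j} : (1 <= m)%N -> (1 <= j)%N -> chord m j%:R <= s j.
Proof.
move=> m1 j1; rewrite /chord; case: (leqP m j) => [mj|jm].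
- have /andP[+ _] := increment_bounds (j - m) m1.
  by rewrite subnKC // natrB //; lra.
- have /andP[_ +] := increment_bounds (m - j) j1.
  by rewrite subnKC ?(ltnW jm) // natrB ?(ltnW jm) //; lra.
Qed.

Definition interp (x : R) : R :=
  beta x * s (Num.truncn x) + (1 - beta x) * s (Num.truncn x).+1.

Let truncn_ge1 {x : R} : 1 <= x -> (1 <= Num.truncn x)%N.
Proof. by move=> x1; rewrite truncn_gt0. Qed.

Let beta_itv {x : R} : 0 <= x -> 0 < beta x <= 1.
Proof.
move=> x0; have /andP[nx xn] := truncn_itv x0.
by rewrite /beta -natr1 in xn *; apply/andP; split; lra.
Qed.

Let interp_chord x : interp x = chord (Num.truncn x) x.
Proof. by rewrite /interp /chord /beta /slope; ring. Qed.

Let chord_le_interp {m x} : (1 <= m)%N -> 1 <= x -> chord m x <= interp x.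
Proof.
move=> m1 x1; have n1 := truncn_ge1 x1.
have /andP[b0 b1] := beta_itv (le_trans ler01 x1).
have -> : chord m x = beta x * chord m (Num.truncn x)%:R +
    (1 - beta x) * chord m (Num.truncn x).+1%:R.
  by rewrite /chord /beta -natr1; ring.
apply: lerD; apply: ler_wpM2l.
- exact: ltW.
- exact: chord_le_s.
- by rewrite subr_ge0.
- exact: chord_le_s.
Qed.

Lemma interp_gt0 x : 1 <= x -> 0 < interp x.
Proof.
move=> x1; have n1 := truncn_ge1 x1.
have /andP[b0 b1] := beta_itv (le_trans ler01 x1).
rewrite /interp; apply: ltr_pwDl; first exact/mulr_gt0/s_gt0.
by apply: mulr_ge0; [rewrite subr_ge0|exact/ltW/s_gt0].
Qed.

Lemma interp_convex a b t : 1 <= a -> 1 <= b -> 0 <= t <= 1 ->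
  interp (t * a + (1 - t) * b) <= t * interp a + (1 - t) * interp b.
Proof.
move=> a1 b1 /andP[t0 t1].
have c1 : 1 <= t * a + (1 - t) * b.
  have : t * 1 <= t * a by rewrite ler_wpM2l.
  have : (1 - t) * 1 <= (1 - t) * b by rewrite ler_wpM2l // subr_ge0.
  lra.
have -> : interp (t * a + (1 - t) * b) =
    t * chord (Num.truncn (t * a + (1 - t) * b)) a +
    (1 - t) * chord (Num.truncn (t * a + (1 - t) * b)) b.
  by rewrite interp_chord /chord; ring.
by apply: lerD; apply: ler_wpM2l; rewrite ?subr_ge0 // chord_le_interp ?truncn_ge1.
Qed.

Lemma interp_decr a b : 1 <= a -> a < b -> interp b < interp a.
Proof.
move=> a1 ab; have m1 := truncn_ge1 (le_trans a1 (ltW ab)).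
apply: (lt_le_trans _ (chord_le_interp m1 a1)).
by rewrite interp_chord /chord ltrD2l ltr_nM2r ?slope_lt0 // ltrD2r.
Qed.

Let interp_lipschitz {a b} : 1 <= a -> 1 <= b ->
  `|interp a - interp b| <= (s 1 - s 2) * `|a - b|.
Proof.
suff side x y : 1 <= x -> 1 <= y -> interp x - interp y <= (s 1 - s 2) * `|x - y|.
  move=> a1 b1; rewrite ler_norml side // andbT.
  by have := side _ _ b1 a1; rewrite distrC; lra.
move=> x1 y1; have m1 := truncn_ge1 x1.
have lo := slope_le (leqnn 1) m1; have neg := slope_lt0 m1.
have := chord_le_interp m1 y1; rewrite [interp x]interp_chord /chord.
have : (x - y) * slope (Num.truncn x) <= `|x - y| * - slope (Num.truncn x).
  rewrite -mulrNN ler_wpM2r ?oppr_ge0 ?(ltW neg) //.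
  by rewrite -normrN ler_norm.
have : `|x - y| * - slope (Num.truncn x) <= `|x - y| * (s 1 - s 2).
  by rewrite ler_wpM2l //; move: lo; rewrite /slope; lra.
lra.
Qed.

Lemma interp_continuous : {within [set x : R | 1 <= x], continuous interp}.
Proof.
have K0 : 0 < s 1 - s 2 by rewrite subr_gt0 s_decr.
apply/subspace_continuousP => x x1; apply/cvgrPdist_lt => e e0.
rewrite near_withinE; exists (e / (s 1 - s 2)); first by rewrite /= divr_gt0.
move=> y /= xy y1; apply: (le_lt_trans (interp_lipschitz x1 y1)).
by rewrite -ltr_pdivlMl // mulrC.
Qed.

Lemma interp_pos_cont_convex_decr : pos_cont_convex_decr interp.
Proof.
split; [exact: interp_gt0 | exact: interp_continuous | exact: interp_convex |].
exact: interp_decr.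
Qed.

End piecewise_linear_interpolation.

Section nonnegative_integrals.
Context d (T : measurableType d) (R : realType) (mu : {measure set T -> \bar R}).

Lemma Rintegral_gt0 (D : set T) (f : T -> R) : measurable D ->
  mu.-integrable D (EFin \o f) -> (forall x, D x -> 0 <= f x) ->
  ~ mu.-negligible (D `&` [set x | 0 < f x]) -> 0 < \int[mu]_(x in D) f x.
Proof.
move=> mD intf f0 Nf; rewrite lt_def Rintegral_ge0 // andbT.
apply/eqP => If0; apply: Nf.
have : (\int[mu]_(x in D) `|(f x)%:E| = 0)%E.
  rewrite -[0%E]/(0%:E) -If0 /Rintegral fineK ?integrable_fin_num //.
  by apply: eq_integral => x /set_mem Dx; rewrite gee0_abs // lee_fin f0.
move/ae_eq_integral_abs => /(_ mD (measurable_int _ intf)) [N [mN N0 sN]].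
exists N; split => // x [Dx fx]; apply: sN => /= f0x.
by case: (f0x Dx) fx => /= ->; rewrite ltxx.
Qed.

Lemma ge0_integrable (f : T -> R) : measurable_fun setT f ->
  (forall x, 0 <= f x) -> (\int[mu]_x (f x)%:E < +oo)%E ->
  mu.-integrable setT (EFin \o f).
Proof.
move=> mf f0 fint; apply/integrableP; split; first exact/measurable_EFinP.
by under eq_integral do rewrite /= ger0_norm //.
Qed.

Lemma not_negligible_gt0 (f : T -> R) : measurable_fun setT f ->
  (forall x, 0 <= f x) -> (\int[mu]_x (f x)%:E != 0)%E ->
  ~ mu.-negligible [set x | 0 < f x].
Proof.
move=> mf f0 If0 [N [mN N0 sN]]; move/eqP: If0; apply.
have /ae_eq_integral_abs : ae_eq mu setT (EFin \o f) (cst 0%:E).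
  exists N; split => // x /= fx; apply: sN.
  by rewrite /= lt_def f0 andbT; apply/eqP => f0x; apply: fx => _; rewrite f0x.
have mEf : measurable_fun setT (EFin \o f) by exact/measurable_EFinP.
move/(_ measurableT mEf) => <-.
by apply: eq_integral => x _; rewrite /= ger0_norm.
Qed.

Section density_mean.
Variables (D : set T) (rho : T -> R).
Hypotheses (mD : measurable D) (rho_int : mu.-integrable D (EFin \o rho)).

Definition bounded_measurable (f : T -> R) :=
  measurable_fun D f /\ exists M, forall x, D x -> `|f x| <= M.

Lemma bounded_measurable_cst c : bounded_measurable (fun=> c).
Proof. by split; [exact: measurable_cst | exists `|c|]. Qed.

Lemma bounded_measurableD f g : bounded_measurable f -> bounded_measurable g ->
  bounded_measurable (fun x => f x + g x).
Proof.
move=> [mf [Mf bf]] [mg [Mg bg]]; split; first exact: measurable_funD.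
exists (Mf + Mg) => x Dx; apply: le_trans (ler_normD _ _) _.
by apply: lerD; [exact: bf | exact: bg].
Qed.

Lemma bounded_measurableZ c f : bounded_measurable f ->
  bounded_measurable (fun x => c * f x).
Proof.
move=> [mf [M bf]]; split; first exact/measurable_funM/mf/measurable_cst.
by exists (`|c| * M) => x Dx; rewrite normrM ler_wpM2l // bf.
Qed.

Lemma bounded_measurableB f g : bounded_measurable f -> bounded_measurable g ->
  bounded_measurable (fun x => f x - g x).
Proof.
move=> bf /(bounded_measurableZ (-1)) bg.
by under [X in bounded_measurable X]funext do rewrite -mulN1r; exact: bounded_measurableD.
Qed.

Lemma integrable_mul_bounded f : bounded_measurable f ->
  mu.-integrable D (EFin \o (rho \* f)).
Proof.
move=> [mf [M bf]].
apply: (le_integrable mD _ _ (integrableZl mD M rho_int)).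
- apply/measurable_EFinP/measurable_funM => //.
  exact/measurable_EFinP/(measurable_int _ rho_int).
- move=> x Dx /=; rewrite lee_fin normrM [`|M * _|]normrM mulrC ler_wpM2r //.
  exact: le_trans (bf x Dx) (ler_norm M).
Qed.

Definition density_mean f := \int[mu]_(x in D) (rho x * f x).

Lemma density_mean0 : density_mean (fun=> 0) = 0.
Proof.
by rewrite /density_mean; under eq_Rintegral do rewrite mulr0; rewrite Rintegral_cst ?mul0r.
Qed.

Lemma density_meanD f g : bounded_measurable f -> bounded_measurable g ->
  density_mean (fun x => f x + g x) = density_mean f + density_mean g.
Proof.
move=> bf bg; rewrite -RintegralD ?integrable_mul_bounded //.
by apply: eq_Rintegral => x _; rewrite mulrDr.
Qed.

Lemma density_meanZ c f : bounded_measurable f ->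
  density_mean (fun x => c * f x) = c * density_mean f.
Proof.
move=> bf; rewrite -RintegralZl ?integrable_mul_bounded //.
by apply: eq_Rintegral => x _; rewrite mulrCA.
Qed.

Lemma density_meanB f g : bounded_measurable f -> bounded_measurable g ->
  density_mean (fun x => f x - g x) = density_mean f - density_mean g.
Proof.
move=> bf bg; rewrite -RintegralB ?integrable_mul_bounded //.
by apply: eq_Rintegral => x _; rewrite mulrBr.
Qed.

Hypothesis rho_ge0 : forall x, D x -> 0 <= rho x.

Lemma le_density_mean f g : bounded_measurable f -> bounded_measurable g ->
  (forall x, D x -> f x <= g x) -> density_mean f <= density_mean g.
Proof.
move=> bf bg fg; apply: le_Rintegral; rewrite ?integrable_mul_bounded //.
by move=> x Dx; rewrite ler_wpM2l ?rho_ge0 ?fg.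
Qed.

Lemma lt_density_mean (A : set T) f g : bounded_measurable f ->
  bounded_measurable g -> (forall x, D x -> f x <= g x) ->
  ~ mu.-negligible A -> (forall x, A x -> [/\ D x, 0 < rho x & f x < g x]) ->
  density_mean f < density_mean g.
Proof.
move=> bf bg fg NA Afg; rewrite -subr_gt0 -density_meanB //.
apply: Rintegral_gt0 => //.
- exact/integrable_mul_bounded/bounded_measurableB.
- by move=> x Dx; rewrite mulr_ge0 ?rho_ge0 // subr_ge0 fg.
- apply: contra_not NA; apply: negligibleS => x /Afg[Dx rx fgx]; split => //=.
  by rewrite mulr_gt0 // subr_gt0.
Qed.

End density_mean.
End nonnegative_integrals.

Lemma measurable_fun_nonincreasing_comp d (T : measurableType d) (R : realType)
    (D : set T) (f : R -> R) (g : T -> R) :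
  measurable D -> measurable_fun D g -> (forall x, D x -> 0 < g x) ->
  (forall a b, 0 < a -> a <= b -> f b <= f a) -> measurable_fun D (f \o g).
Proof.
move=> mD mg g0 f_anti.
apply: (eq_measurable_fun ((f \o expR) \o (@ln R \o g))).
  by move=> x /set_mem Dx; rewrite /= lnK // posrE g0.
apply: measurableT_comp; last exact: measurableT_comp (@measurable_ln R) mg.
apply: nonincreasing_measurable => // s t st.
by rewrite /= f_anti ?expR_gt0 ?ler_expR.
Qed.

Section importance_weights.
Context (R : realType) (d : measure_display) (X : measurableType d)
  (mu : {measure set X -> \bar R}) (pi q : X -> R).
Hypotheses (mpi : measurable_fun setT pi) (mq : measurable_fun setT q)
  (pi_ge0 : forall x, 0 <= pi x) (q_ge0 : forall x, 0 <= q x)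
  (pi1 : (\int[mu]_(x in setT) (pi x)%:E = 1)%E)
  (q1 : (\int[mu]_(x in setT) (q x)%:E = 1)%E)
  (q_gt0 : forall x, 0 < pi x -> 0 < q x).

Local Notation w := (wgt pi q).
Local Notation qmean := (density_mean mu setT q).
Local Notation bounded := (bounded_measurable setT).

Lemma wgt_ge0 x : 0 <= w x.
Proof. by rewrite /wgt; case: ifP => // _; rewrite divr_ge0. Qed.

Lemma wgt_gt0 x : 0 < pi x -> 0 < w x.
Proof. by move=> px; rewrite /wgt px divr_gt0 ?q_gt0. Qed.

Let shift_gt0 a y : 0 < a -> 0 < a + w y.
Proof. by move=> a0; rewrite ltr_wpDr ?wgt_ge0. Qed.

Lemma measurable_wgt : measurable_fun setT w.
Proof.
(* [w = pi / q'], where [q' > 0] everywhere because [pi = 0] off [supp pi]. *)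
pose q' x := if 0 < pi x then q x else 1.
have -> : w = fun x => pi x * (GRing.inv \o q') x.
  apply/funext => x; rewrite /wgt /q' /=; case: ifPn => // px.
  by rewrite invr1 mulr1; apply/eqP; rewrite eq_le pi_ge0 leNgt px.
apply: measurable_funM => //; apply: measurable_fun_nonincreasing_comp => //.
- apply: measurable_fun_ifT => //.
  by apply: measurable_fun_ltr => //; exact: measurable_cst.
- by move=> x _; rewrite /q'; case: ifP => // /q_gt0.
- by move=> a b a0 ab; rewrite lef_pV2 ?posrE // (lt_le_trans a0).
Qed.

Lemma q_integrable : mu.-integrable setT (EFin \o q).
Proof. by apply: ge0_integrable => //; rewrite q1 ltry. Qed.

Lemma supp_not_negligible : ~ mu.-negligible (supp pi).
Proof. by apply: not_negligible_gt0 => //; rewrite pi1 onee_eq0. Qed.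

Lemma qmean_cst c : qmean (fun=> c) = c.
Proof.
rewrite /density_mean; under eq_Rintegral do rewrite mulrC.
by rewrite RintegralZl ?q_integrable // /Rintegral q1 mulr1.
Qed.

Lemma qmean_le f g : bounded f -> bounded g -> (forall y, f y <= g y) ->
  qmean f <= qmean g.
Proof. by move=> bf bg fg; apply: (le_density_mean measurableT q_integrable). Qed.

Lemma qmean_lt f g : bounded f -> bounded g -> (forall y, f y <= g y) ->
  (forall y, 0 < pi y -> f y < g y) -> qmean f < qmean g.
Proof.
move=> bf bg fg fg_supp.
apply: (lt_density_mean _ q_integrable _ bf bg _ supp_not_negligible) => //.
by move=> y py; split; rewrite ?q_gt0 ?fg_supp.
Qed.

Definition shift_mean (f : R -> R) (a : R) := qmean (fun y => f (a + w y)).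

(* [mean_inv k a] is the integral of [(a + w y_1 + ... + w y_k)^-1] against
   [q(dy_1) ... q(dy_k)]. *)
Fixpoint mean_inv (k : nat) (a : R) : R :=
  if k is k.+1 then shift_mean (mean_inv k) a else a^-1.

Definition inv_dominated (f : R -> R) :=
  (forall a, 0 < a -> 0 < f a <= a^-1) /\
  (forall a b, 0 < a -> a <= b -> f b <= f a).

Lemma bounded_shift f a : inv_dominated f -> 0 < a -> bounded (fun y => f (a + w y)).
Proof.
move=> [f_bnd f_anti] a0; split.
  apply: (measurable_fun_nonincreasing_comp (g := fun y => a + w y)) => //.
  - exact: measurable_funD (measurable_cst _) measurable_wgt.
  - by move=> y _; exact: shift_gt0.
exists a^-1 => y _; have /andP[f0 fa] := f_bnd _ (shift_gt0 y a0).
rewrite ger0_norm ?(ltW f0) //; apply: le_trans fa _.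
by rewrite lef_pV2 ?posrE ?shift_gt0 // lerDl wgt_ge0.
Qed.

Lemma shift_mean_dominated f : inv_dominated f -> inv_dominated (shift_mean f).
Proof.
move=> fD; have [f_bnd f_anti] := fD.
split=> [a a0|a b a0 ab].
  have bf := bounded_shift fD a0; have bc := bounded_measurable_cst setT.
  apply/andP; split.
    rewrite -[0](qmean_cst 0); apply: qmean_lt => // y.
      by have /andP[/ltW] := f_bnd _ (shift_gt0 y a0).
    by have /andP[] := f_bnd _ (shift_gt0 y a0).
  rewrite -[a^-1]qmean_cst; apply: qmean_le => // y.
  have /andP[_ /le_trans] := f_bnd _ (shift_gt0 y a0); apply.
  by rewrite lef_pV2 ?posrE ?shift_gt0 // lerDl wgt_ge0.
apply: qmean_le => [||y]; first exact: bounded_shift fD (lt_le_trans a0 ab).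
  exact: bounded_shift fD a0.
by apply: f_anti; rewrite ?shift_gt0 ?lerD2r.
Qed.

Lemma mean_inv_dominated k : inv_dominated (mean_inv k).
Proof.
elim: k => [|k IH]; last exact: shift_mean_dominated.
split=> [a a0|a b a0 ab]; first by rewrite /= invr_gt0 a0 lexx.
by rewrite /= lef_pV2 ?posrE ?(lt_le_trans a0).
Qed.

Lemma bounded_mean_inv k a : 0 < a -> bounded (fun y => mean_inv k (a + w y)).
Proof. exact/bounded_shift/mean_inv_dominated. Qed.

Definition mean_inv_decr k a := mean_inv k a - mean_inv k.+1 a.

Lemma bounded_mean_inv_decr k a : 0 < a ->
  bounded (fun y => mean_inv_decr k (a + w y)).
Proof. by move=> a0; apply: bounded_measurableB; exact: bounded_mean_inv. Qed.

Lemma mean_inv_decr0 a : 0 < a ->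
  mean_inv_decr 0 a = qmean (fun y => a^-1 - (a + w y)^-1).
Proof.
move=> a0; rewrite (density_meanB measurableT q_integrable) ?qmean_cst //.
  exact: bounded_measurable_cst.
exact: (bounded_mean_inv 0).
Qed.

Lemma mean_inv_decrS k a : 0 < a ->
  mean_inv_decr k.+1 a = shift_mean (mean_inv_decr k) a.
Proof.
move=> a0; rewrite /shift_mean /mean_inv_decr.
by rewrite (density_meanB measurableT q_integrable) //; exact: bounded_mean_inv.
Qed.

Lemma mean_inv_decr_gt0 k a : 0 < a -> 0 < mean_inv_decr k a.
Proof.
elim: k a => [|k IH] a a0.
  rewrite mean_inv_decr0 // -[0](qmean_cst 0); apply: qmean_lt => [||y|y py].
  - exact: bounded_measurable_cst.
  - exact/bounded_measurableB/(bounded_mean_inv 0 a0)/bounded_measurable_cst.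
  - by rewrite subr_ge0 lef_pV2 ?posrE ?shift_gt0 // lerDl wgt_ge0.
  - by rewrite subr_gt0 ltf_pV2 ?posrE ?shift_gt0 // ltrDl wgt_gt0.
rewrite mean_inv_decrS // -[0](qmean_cst 0); apply: qmean_lt => [||y|y _].
- exact: bounded_measurable_cst.
- exact: bounded_mean_inv_decr.
- exact/ltW/IH/shift_gt0.
- exact/IH/shift_gt0.
Qed.

Lemma mean_inv_decr0_nonincreasing a b : 0 < a -> a <= b ->
  mean_inv_decr 0 b <= mean_inv_decr 0 a.
Proof.
move=> a0 ab; have b0 := lt_le_trans a0 ab.
rewrite !mean_inv_decr0 //; apply: qmean_le => [||y].
- exact/bounded_measurableB/(bounded_mean_inv 0 b0)/bounded_measurable_cst.
- exact/bounded_measurableB/(bounded_mean_inv 0 a0)/bounded_measurable_cst.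
have u0 := wgt_ge0 y; set u := w y.
have e c : 0 < c -> c^-1 - (c + u)^-1 = u * (c * (c + u))^-1.
  by move=> c0; field; rewrite !gt_eqF ?ltr_wpDr.
rewrite !e // ler_wpM2l // lef_pV2 ?posrE ?mulr_gt0 ?ltr_wpDr //.
by apply: ler_pM; rewrite ?lerD2r ?addr_ge0 // ltW.
Qed.

Lemma mean_inv_decr_nonincreasing k a : 0 < a ->
  mean_inv_decr k.+1 a <= mean_inv_decr k a.
Proof.
elim: k a => [|k IH] a a0.
  rewrite mean_inv_decrS // -[X in _ <= X]qmean_cst.
  apply: qmean_le => [||y]; first exact: bounded_mean_inv_decr.
    exact: bounded_measurable_cst.
  by apply: mean_inv_decr0_nonincreasing; rewrite ?lerDl ?wgt_ge0.
rewrite !mean_inv_decrS //; apply: qmean_le => [||y]; try exact: bounded_mean_inv_decr.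
exact/IH/shift_gt0.
Qed.

Lemma eps_iter_mean_inv k z a : 0 < a ->
  eps_iter mu pi q k z a = (w z * mean_inv k a)%:E.
Proof.
elim: k a => [|k IH] a a0 //=.
under eq_integral do rewrite IH ?shift_gt0 // -EFinM.
have bf : bounded (fun y => w z * mean_inv k (a + w y)).
  exact/bounded_measurableZ/bounded_mean_inv.
rewrite /shift_mean -(density_meanZ measurableT q_integrable _ (bounded_mean_inv k a0)).
rewrite /density_mean /Rintegral fineK //.
exact/integrable_fin_num/(integrable_mul_bounded measurableT q_integrable bf).
Qed.

Lemma epsN_mean_inv n z : 0 < pi z ->
  epsN mu pi q n.+1 z = w z * mean_inv n (w z).
Proof. by move=> pz; rewrite /epsN eps_iter_mean_inv ?wgt_gt0. Qed.

Lemma epsN_gt0 n z : 0 < pi z -> 0 < epsN mu pi q n.+1 z.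
Proof.
move=> pz; have [bnd _] := mean_inv_dominated n.
rewrite epsN_mean_inv // mulr_gt0 ?wgt_gt0 //.
by have /andP[] := bnd _ (wgt_gt0 pz).
Qed.

Lemma epsN_decr n z : 0 < pi z -> epsN mu pi q n.+2 z < epsN mu pi q n.+1 z.
Proof.
move=> pz; rewrite !epsN_mean_inv // ltr_pM2l ?wgt_gt0 // -subr_gt0.
exact/mean_inv_decr_gt0/wgt_gt0.
Qed.

Lemma epsN_convex n z : 0 < pi z ->
  0 <= epsN mu pi q n.+1 z - 2 * epsN mu pi q n.+2 z + epsN mu pi q n.+3 z.
Proof.
move=> pz; have w0 := wgt_gt0 pz; rewrite !epsN_mean_inv //.
have -> : w z * mean_inv n (w z) - 2 * (w z * mean_inv n.+1 (w z)) +
    w z * mean_inv n.+2 (w z) =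
  w z * (mean_inv_decr n (w z) - mean_inv_decr n.+1 (w z)) by rewrite /mean_inv_decr; ring.
by apply: mulr_ge0; [exact: ltW | rewrite subr_ge0 mean_inv_decr_nonincreasing].
Qed.

Lemma measurable_supp : measurable (supp pi).
Proof.
have -> : supp pi = pi @^-1` `]0, +oo[.
  by apply/seteqP; split => x /=; rewrite in_itv /= andbT.
by rewrite -[_ @^-1` _]setTI; exact: mpi.
Qed.

Local Notation pmean := (density_mean mu (supp pi) pi).
Local Notation bounded_supp := (bounded_measurable (supp pi)).

Let pi_integrable : mu.-integrable (supp pi) (EFin \o pi).
Proof.
apply: integrableS measurableT measurable_supp (subsetT _) _.
by apply: ge0_integrable => //; rewrite pi1 ltry.
Qed.

Let pi_ge0_supp x : supp pi x -> 0 <= pi x.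
Proof. by move=> _; exact: pi_ge0. Qed.

Lemma bounded_epsN n : bounded_supp (epsN mu pi q n.+1).
Proof.
have [bnd anti] := mean_inv_dominated n.
split.
  apply: (eq_measurable_fun (fun z => w z * mean_inv n (w z))).
    by move=> z /set_mem pz; rewrite epsN_mean_inv.
  apply: measurable_funM; first exact: measurable_funS measurableT _ measurable_wgt.
  apply: measurable_fun_nonincreasing_comp => //; first exact: measurable_supp.
    exact: measurable_funS measurableT _ measurable_wgt.
  exact: wgt_gt0.
exists 1 => z pz; have w0 := wgt_gt0 pz; have /andP[m0 m1] := bnd _ w0.
rewrite epsN_mean_inv // ger0_norm; last exact: mulr_ge0 (ltW w0) (ltW m0).
by rewrite -(mulfV (lt0r_neq0 w0)) ler_pM2l.
Qed.

Lemma epsN_bar_mean n : epsN_bar mu pi q n = pmean (epsN mu pi q n).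
Proof. by congr fine; apply: eq_integral => z _; rewrite EFinM. Qed.

Lemma epsN_bar_gt0 n : 0 < epsN_bar mu pi q n.+1.
Proof.
rewrite epsN_bar_mean -(density_mean0 mu pi measurable_supp).
apply: (lt_density_mean measurable_supp pi_integrable pi_ge0_supp _ _ _ supp_not_negligible).
- exact: bounded_measurable_cst.
- exact: bounded_epsN.
- by move=> z pz; rewrite ltW ?epsN_gt0.
- by move=> z pz; split; rewrite ?epsN_gt0.
Qed.

Lemma epsN_bar_decr n : epsN_bar mu pi q n.+2 < epsN_bar mu pi q n.+1.
Proof.
rewrite !epsN_bar_mean.
apply: (lt_density_mean measurable_supp pi_integrable pi_ge0_supp _ _ _ supp_not_negligible).
- exact: bounded_epsN.
- exact: bounded_epsN.
- by move=> z pz; rewrite ltW ?epsN_decr.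
- by move=> z pz; split; rewrite ?epsN_decr.
Qed.

Lemma epsN_bar_convex n :
  0 <= epsN_bar mu pi q n.+1 - 2 * epsN_bar mu pi q n.+2 + epsN_bar mu pi q n.+3.
Proof.
have [mS b] := (measurable_supp, bounded_epsN).
have b2 := bounded_measurableZ 2 (b n.+1).
rewrite !epsN_bar_mean -(density_meanZ mS pi_integrable 2 (b n.+1)).
rewrite -(density_meanB mS pi_integrable (b n) b2).
rewrite -(density_meanD mS pi_integrable (bounded_measurableB (b n) b2) (b n.+2)).
rewrite -(density_mean0 mu pi mS); apply: le_density_mean => //.
- exact: bounded_measurable_cst.
- exact/bounded_measurableD/(b n.+2)/bounded_measurableB.
- by move=> z pz; exact: epsN_convex.
Qed.

End importance_weights.

Theorem theorem6p12 (R : realType) (d : measure_display) (X : measurableType d)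
  (mu : {measure set X -> \bar R}) (pi q : X -> R) :
  sigma_finite setT mu ->
  measurable_fun setT pi -> measurable_fun setT q ->
  (forall x, 0 <= pi x) -> (forall x, 0 <= q x) ->
  (\int[mu]_(x in setT) (pi x)%:E = 1)%E ->
  (\int[mu]_(x in setT) (q x)%:E = 1)%E ->
  (forall x, 0 < pi x -> 0 < q x) ->
  pos_cont_convex_decr (epsL mu pi q) /\
  (forall x, 0 < pi x -> pos_cont_convex_decr (fun lam => epsLx mu pi q lam x)).
Proof.
(* No Fubini theorem is needed, hence no sigma-finiteness: the integrals
   defining [eps_iter] are evaluated one variable at a time. *)
move=> _ mpi mq pi_ge0 q_ge0 pi1 q1 q_gt0; split=> [|x px].
  apply: (interp_pos_cont_convex_decr (s := epsN_bar mu pi q)) => -[|n] // _.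
  - exact: epsN_bar_gt0.
  - exact: epsN_bar_decr.
  - exact: epsN_bar_convex.
apply: (interp_pos_cont_convex_decr (s := fun N => epsN mu pi q N x)) => -[|n] // _.
- exact: epsN_gt0.
- exact: epsN_decr.
- exact: epsN_convex.
Qed.
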